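(* Let $d\ge1$. Let $G$ be a $3$-connected ordered graph on $n$ vertices with $m$ edges, and let $H$ be an ordered graph with no isolated vertices and with $m$ edges. Suppose $M^{\mathbb E}_{d,G}=M^{\mathbb E}_{d,H}$. Then there is a bijection $\sigma$ from the vertex set of $G$ to the vertex set of $H$ such that for every $k$, if the $k$-th edge of $G$ is $\{i,j\}$ then the $k$-th edge of $H$ is $\{\sigma(i),\sigma(j)\}$.
   Context: An ordered graph is a finite vertex set together with an ordered sequence $(E_1,\dots,E_m)$ of distinct unordered pairs of distinct vertices. For a real configuration $\mathbf p$ (one point $\mathbf p_i\in\mathbb R^d$ per vertex), $m^{\mathbb E}_G(\mathbf p)\in\mathbb R^m$ has $k$-th coordinate $\|\mathbf p_i-\mathbf p_j\|^2$ where $E_k=\{i,j\}$. The Euclidean measurement set $M^{\mathbb E}_{d,G}\subseteq\mathbb R^m$ is the image of $m^{\mathbb E}_G$ over all real configurations in $\mathbb R^d$. *)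

From Stdlib Require Import Reals.
From mathcomp Require Import all_boot.

Set Implicit Arguments.
Unset Strict Implicit.
Unset Printing Implicit Defensive.

(* An ordered graph with vertex type V and m edges: E k = (i, j) represents
   the unordered pair {i, j} which is the k-th edge. *)
Definition same_upair (V : eqType) (e f : V * V) : Prop :=
  (e.1 = f.1 /\ e.2 = f.2) \/ (e.1 = f.2 /\ e.2 = f.1).

Definition is_ordered_graph (V : finType) (m : nat) (E : 'I_m -> V * V) : Prop :=
  (forall k, (E k).1 <> (E k).2) /\
  (forall k l, same_upair (E k) (E l) -> k = l).

Definition sqdist (d : nat) (x y : 'I_d -> R) : R :=
  \big[Rplus/R0]_(c < d) Rmult (Rminus (x c) (y c)) (Rminus (x c) (y c)).

Definition meas (V : finType) (m d : nat) (E : 'I_m -> V * V)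
  (p : V -> 'I_d -> R) : 'I_m -> R :=
  fun k => sqdist (p (E k).1) (p (E k).2).

Definition meas_set (V : finType) (m d : nat) (E : 'I_m -> V * V)
  (x : 'I_m -> R) : Prop :=
  exists p : V -> 'I_d -> R, forall k, x k = meas E p k.

Definition adj (V : finType) (m : nat) (E : 'I_m -> V * V) : rel V :=
  fun u v => [exists k, (E k == (u, v)) || (E k == (v, u))].

Definition adj_minus (V : finType) (m : nat) (E : 'I_m -> V * V)
  (S : {set V}) : rel V :=
  fun u v => [&& u \notin S, v \notin S & adj E u v].

Definition k_connected (V : finType) (m : nat) (E : 'I_m -> V * V) (k : nat)
  : Prop :=
  k < #|V| /\
  forall S : {set V}, #|S| < k ->
    forall u v, u \notin S -> v \notin S -> connect (adj_minus E S) u v.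

Definition no_isolated (V : finType) (m : nat) (E : 'I_m -> V * V) : Prop :=
  forall v, exists k, v = (E k).1 \/ v = (E k).2.

From Stdlib Require Import Reals Lra FunctionalExtensionality PropExtensionality.
From HB Require Import structures.
From mathcomp Require Import all_boot.

Set Implicit Arguments.
Unset Strict Implicit.
Unset Printing Implicit Defensive.

(* A vertex star is recognised by the measurement set M alone: call a set D of
   edges star-like if some measurement vanishes exactly off D, every
   measurement vanishing off D is constant on D, and M does not split as a
   product along any partition of the edges outside D into two nonempty parts.
   In a 3-connected graph every vertex star is star-like, and in any graph every
   star-like set is a vertex star.  As G and H share their measurement set,
   each star of G is a star of H; the induced vertex map is injective since
   distinct vertices of G have distinct stars, it maps edges to edges, and it is
   onto because H has no isolated vertices. *)

Local Open Scope R_scope.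

HB.instance Definition _ :=
  Monoid.isComLaw.Build R R0 Rplus (fun a b c => esym (Rplus_assoc a b c)) Rplus_comm Rplus_0_l.

Lemma sqdistC d (x y : 'I_d -> R) : sqdist x y = sqdist y x.
Proof. by apply: eq_bigr => c _; ring. Qed.

Lemma sqdist_xx d (x : 'I_d -> R) : sqdist x x = 0.
Proof. by rewrite /sqdist big1 // => c _; ring. Qed.

Lemma sqdist_eq0 d (x y : 'I_d -> R) : sqdist x y = 0 -> x = y.
Proof.
move=> xy0; apply: functional_extensionality => c; move: xy0.
rewrite /sqdist (bigD1 c) //=; set rest := \big[_/_]_(i < d | _) _.
have rest_ge0 : 0 <= rest.
  by apply: big_ind => [|a b|i _]; [lra | lra | apply: Rle_0_sqr].
have := Rle_0_sqr (x c - y c); rewrite /Rsqr => sq_ge0 sum0.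
have /Rmult_integral [] : (x c - y c) * (x c - y c) = 0 by lra.
all: lra.
Qed.

Definition bit_pt d (b : bool) : 'I_d -> R := fun _ => if b then 1 else 0.
Arguments bit_pt : clear implicits.

Lemma sqdist_bit_pt d b1 b2 :
  sqdist (bit_pt d b1) (bit_pt d b2) = if b1 == b2 then 0 else INR d.
Proof.
have sum1 : \big[Rplus/0]_(c < d) 1 = INR d.
  rewrite big_const_ord; elim: d => //= n ->; case: n => /= [|n]; lra.
by case: b1; case: b2; rewrite /= ?sqdist_xx // -sum1; apply: eq_bigr => c _;
  rewrite /bit_pt /=; ring.
Qed.

Lemma INR_neq0 d : (0 < d)%N -> INR d <> 0.
Proof. by move=> d_gt0; apply: not_0_INR => d0; rewrite d0 in d_gt0. Qed.

Lemma connect_const (T : finType) (e : rel T) (A : Type) (f : T -> A) u w :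
  (forall x y, e x y -> f x = f y) -> connect e u w -> f u = f w.
Proof.
move=> f_e /connectP [p + ->]; elim: p u => [|y p IHp] u //= /andP [/f_e -> ep].
exact: IHp.
Qed.

Lemma connect_crossing (T : finType) (e : rel T) (A B : T -> Prop) u w :
  (forall x y, e x y -> A x -> A y \/ B x) -> connect e u w -> A u -> B w ->
  exists z, A z /\ B z.
Proof.
move=> stepAB /connectP [p + ->]; elim: p u => [|y p IHp] u /=; first by exists u.
case/andP=> /stepAB exy ep Au Bw; have [Ay|Bu] := exy Au; last by exists u.
exact: IHp ep Ay Bw.
Qed.

Lemma exists_notin (T : finType) (S : {set T}) : (#|S| < #|T|)%N -> exists w, w \notin S.
Proof.
move=> S_small; apply/existsP; rewrite -negb_forall; move: S_small.
apply: contraTN => /forallP S_full; rewrite -leqNgt.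
by apply: subset_leq_card; apply/subsetP=> x _; apply: S_full.
Qed.

Definition cut_conf (V : Type) (d : nat) (A : pred V) : V -> 'I_d -> R :=
  fun u => bit_pt d (A u).
Arguments cut_conf {V} d A _.

Section OrderedGraph.
Variables (V : finType) (m : nat) (E : 'I_m -> V * V).

Definition incident (v : V) : pred 'I_m := fun k => (v == (E k).1) || (v == (E k).2).

Lemma edge_pair k : E k = ((E k).1, (E k).2).
Proof. by case: (E k). Qed.

Lemma incidentE v k u w :
  E k = (u, w) \/ E k = (w, u) -> incident v k = (v == u) || (v == w).
Proof. by rewrite /incident => -[] ->; rewrite //= orbC. Qed.

Lemma meas_edge d (q : V -> 'I_d -> R) k u w :
  E k = (u, w) \/ E k = (w, u) -> meas E q k = sqdist (q u) (q w).
Proof. by rewrite /meas => -[] ->; rewrite //= sqdistC. Qed.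

Lemma adj_minusP S u w :
  adj_minus E S u w ->
  [/\ u \notin S, w \notin S & exists k, E k = (u, w) \/ E k = (w, u)].
Proof.
case/and3P=> uS wS /existsP [k /orP [] /eqP Ek]; split=> //; exists k; by [left | right].
Qed.

Lemma meas_cut_conf d (A : pred V) k :
  meas E (cut_conf d A) k = if A (E k).1 == A (E k).2 then 0 else INR d.
Proof. exact: sqdist_bit_pt. Qed.

Hypothesis E_graph : is_ordered_graph E.

Lemma edge_neq k u w : E k = (u, w) \/ E k = (w, u) -> u != w.
Proof.
by case: E_graph => noloop _ Ek; apply/eqP=> uw; apply: (noloop k); case: Ek => ->; rewrite uw.
Qed.

Lemma incident_edge v k :
  incident v k -> exists u, u != v /\ (E k = (v, u) \/ E k = (u, v)).
Proof.
have Ek := edge_pair k; have /negPf ne := edge_neq (or_introl Ek).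
rewrite /incident => /orP [] /eqP ->; [exists (E k).2 | exists (E k).1].
  by rewrite eq_sym ne; split; auto.
by rewrite ne; split; auto.
Qed.

Lemma meas_star_conf d v k :
  meas E (cut_conf d (pred1 v)) k = if incident v k then INR d else 0.
Proof.
have := edge_neq (or_introl (edge_pair k)); rewrite meas_cut_conf /incident /=.
case: (E k) => a b /= ab; rewrite ![v == _]eq_sym.
case: (a =P v) => [av|_]; case: (b =P v) => [bv|_] //.
by rewrite av bv eqxx in ab.
Qed.

End OrderedGraph.

Definition splits m (M : ('I_m -> R) -> Prop) (D P : pred 'I_m) : Prop :=
  forall x y, M x -> M y -> exists2 z, M z &
    forall k, ~~ D k -> z k = if P k then x k else y k.

Record star_like m (M : ('I_m -> R) -> Prop) (D : pred 'I_m) : Prop := StarLike {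
  star_like_nonempty : exists k, D k;
  star_like_support : exists2 x, M x & forall k, x k = 0 <-> ~~ D k;
  star_like_flat : forall x, M x -> (forall k, ~~ D k -> x k = 0) ->
    forall s t, D s -> D t -> x s = x t;
  star_like_unsplit : forall P : pred 'I_m,
    (exists k, ~~ D k && P k) -> (exists k, ~~ D k && ~~ P k) -> ~ splits M D P }.

Section ThreeConnected.
Variables (V : finType) (m d : nat) (E : 'I_m -> V * V).
Hypotheses (d_gt0 : (0 < d)%N) (E_graph : is_ordered_graph E) (E_conn : k_connected E 3).

Lemma eq_off_small_set (q : V -> 'I_d -> R) (S : {set V}) :
  (#|S| < 3)%N ->
  (forall k u w, E k = (u, w) -> u \notin S -> w \notin S -> sqdist (q u) (q w) = 0) ->
  forall u w, u \notin S -> w \notin S -> q u = q w.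
Proof.
move=> S_small q_edge u w uS wS; apply: connect_const (E_conn.2 S S_small u w uS wS).
move=> x y /adj_minusP [xS yS [k [] /q_edge Ek]]; apply: sqdist_eq0; first exact: Ek.
by rewrite sqdistC; apply: Ek.
Qed.

Lemma incident_separates i j : i <> j -> exists k, incident E i k && ~~ incident E j k.
Proof.
move=> ij; have [w] : exists w, w \notin [set i; j].
  by apply: exists_notin; rewrite cards2 (leq_trans _ E_conn.1) //; case: (i != j).
rewrite !inE => /norP [wi wj].
have one_small : (#|[set j]| < 3)%N by rewrite cards1.
have /connectP [[|y p] /=] :=
  E_conn.2 _ one_small i w (introN set1P ij) (introN set1P (elimN eqP wj)).
  by move=> _ wi'; rewrite wi' eqxx in wi.
case/andP=> /adj_minusP [_ yj [k Ek]] _ _; exists k.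
rewrite !(incidentE _ Ek) eqxx /= negb_or; rewrite inE in yj.
by rewrite (eq_sym j y) yj andbT; apply/eqP=> ji; apply: ij.
Qed.

Lemma star_support v :
  exists2 x, meas_set d E x & forall k, x k = 0 <-> ~~ incident E v k.
Proof.
exists (meas E (cut_conf d (pred1 v))); first by exists (cut_conf d (pred1 v)).
move=> k; rewrite meas_star_conf //; case: (incident E v k) => //.
by split=> // /(INR_neq0 d_gt0).
Qed.

Lemma star_flat v x : meas_set d E x -> (forall k, ~~ incident E v k -> x k = 0) ->
  forall s t, incident E v s -> incident E v t -> x s = x t.
Proof.
move=> [q xq] x_off s t /(incident_edge E_graph) [u [uv Es]].
case/(incident_edge E_graph)=> u' [u'v Et].
have q_off : forall u w, u \notin [set v] -> w \notin [set v] -> q u = q w.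
  apply: eq_off_small_set; first by rewrite cards1.
  move=> k a b Ek; rewrite !inE => av bv; rewrite -(meas_edge q (or_introl Ek)) -xq x_off //.
  by rewrite (incidentE _ (or_introl Ek)) negb_or ![v == _]eq_sym av bv.
by rewrite !xq (meas_edge q Es) (meas_edge q Et) (q_off u u') // inE.
Qed.

Lemma exists_mixed_vertex v (P : pred 'I_m) :
  (exists k, ~~ incident E v k && P k) -> (exists k, ~~ incident E v k && ~~ P k) ->
  exists z ka kb, [/\ ~~ incident E v ka && P ka, ~~ incident E v kb && ~~ P kb,
                     incident E z ka & incident E z kb].
Proof.
move=> [k1 /andP [vk1 Pk1]] [k2 /andP [vk2 Pk2]].
pose touches (b : bool) z := exists2 k, ~~ incident E v k && (P k == b) & incident E z k.
suff [z [[ka kaP zka] [kb kbP zkb]]] : exists z, touches true z /\ touches false z.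
  exists z, ka, kb; split=> //; [move: kaP | move: kbP];
  by case: (P _); rewrite ?andbT ?andbF.
have endpoint1 k : ~~ incident E v k -> (E k).1 \notin [set v].
  by rewrite inE /incident negb_or eq_sym => /andP [].
have one_small : (#|[set v]| < 3)%N by rewrite cards1.
have conn := E_conn.2 _ one_small _ _ (endpoint1 _ vk1) (endpoint1 _ vk2).
apply: (connect_crossing (A := touches true) (B := touches false) _ conn).
- move=> a b /adj_minusP [av bv [k Ek]] _; rewrite !inE in av bv.
  have vk : ~~ incident E v k by rewrite (incidentE _ Ek) negb_or ![v == _]eq_sym av bv.
  case Pk : (P k); [left | right]; exists k; rewrite ?vk ?Pk //;
    by rewrite (incidentE _ Ek) eqxx ?orbT.
- by exists k1; rewrite ?vk1 ?Pk1 // /incident eqxx.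
- exists k2; last by rewrite /incident eqxx.
  by rewrite vk2 eqbF_neg.
Qed.

Lemma star_unsplit v (P : pred 'I_m) :
  (exists k, ~~ incident E v k && P k) -> (exists k, ~~ incident E v k && ~~ P k) ->
  ~ splits (meas_set d E) (incident E v) P.
Proof.
move=> /exists_mixed_vertex mixed /mixed [z [ka [kb []]]] /andP [vka Pka] /andP [vkb Pkb].
move=> /(incident_edge E_graph) [a [az Eka]] /(incident_edge E_graph) [b [bz Ekb]] split_P.
(* Glue the zero configuration on [P] with the indicator of [z] off [P]: the glued
   configuration is constant off [{z, v}] by 3-connectivity, so it cannot see the
   edge [kb] from [z], yet it must measure [d] there. *)
have [x [q xq] glued] := split_P _ _ (ex_intro _ (cut_conf d pred0) (fun _ => erefl))
  (ex_intro _ (cut_conf d (pred1 z)) (fun _ => erefl)).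
have q_off : forall u w, u \notin [set z; v] -> w \notin [set z; v] -> q u = q w.
  apply: eq_off_small_set; first by rewrite cards2; case: (z != v).
  move=> k u w Ek; rewrite !inE => /norP [uz uv] /norP [wz wv].
  have vk : ~~ incident E v k.
    by rewrite (incidentE _ (or_introl Ek)) negb_or ![v == _]eq_sym uv wv.
  rewrite -(meas_edge q (or_introl Ek)) -xq glued // meas_cut_conf meas_star_conf //.
  by rewrite (incidentE _ (or_introl Ek)) ![z == _]eq_sym (negPf uz) (negPf wz); case: (P k).
move: (vka) (vkb); rewrite (incidentE _ Eka) (incidentE _ Ekb) !negb_or.
move=> /andP [vz va] /andP [_ vb].
have off_zv u : u != z -> v != u -> u \notin [set z; v].
  by move=> uz vu; rewrite !inE negb_or uz eq_sym vu.
have qza : q z = q a.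
  apply: sqdist_eq0; rewrite -(meas_edge q Eka) -xq glued // Pka.
  by rewrite meas_cut_conf eqxx.
have := glued kb vkb; rewrite xq (meas_edge q Ekb) qza (q_off a b) ?off_zv // sqdist_xx.
rewrite (negPf Pkb) meas_star_conf // (incidentE _ Ekb) eqxx => d0.
exact: INR_neq0 d_gt0 (esym d0).
Qed.

Lemma incident_star_like v : star_like (meas_set d E) (incident E v).
Proof.
split; [| exact: star_support | exact: star_flat | exact: star_unsplit].
have [j] : exists j, j \notin [set v].
  by apply: exists_notin; rewrite cards1 (leq_trans _ E_conn.1).
rewrite inE => /eqP jv; have [k /andP [vk _]] := incident_separates (nesym jv).
by exists k.
Qed.

End ThreeConnected.

Section StarLike.
Variables (W : finType) (m d : nat) (E : 'I_m -> W * W) (D : pred 'I_m).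

Definition off_adj : rel W :=
  fun u w => [exists k, ~~ D k && ((E k == (u, w)) || (E k == (w, u)))].

Lemma off_adjP u w :
  reflect (exists2 k, ~~ D k & E k = (u, w) \/ E k = (w, u)) (off_adj u w).
Proof.
apply: (iffP existsP) => [[k /andP [Dk /orP [] /eqP Ek]]|[k Dk Ek]]; exists k => //.
- by left.
- by right.
- by rewrite Dk; case: Ek => ->; rewrite eqxx ?orbT.
Qed.

Lemma off_adj_sym : symmetric off_adj.
Proof. by move=> u w; apply/off_adjP/off_adjP=> -[k Dk Ek]; exists k => //; case: Ek; auto. Qed.

Lemma off_connect_edge a k :
  ~~ D k -> connect off_adj a (E k).1 = connect off_adj a (E k).2.
Proof.
move=> Dk; have e12 : off_adj (E k).1 (E k).2.
  by apply/off_adjP; exists k => //; left; apply: edge_pair.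
apply/idP/idP=> ak; apply: connect_trans ak (connect1 _) => //.
by rewrite off_adj_sym.
Qed.

Lemma eq_off_connect (q : W -> 'I_d -> R) u w :
  (forall k, ~~ D k -> meas E q k = 0) -> connect off_adj u w -> q u = q w.
Proof.
move=> q_off; apply: connect_const => x y /off_adjP [k Dk Ek].
by apply: sqdist_eq0; rewrite -(meas_edge q Ek) q_off.
Qed.

Lemma closed_cut_splits (C : pred W) :
  (forall k, ~~ D k -> C (E k).1 = C (E k).2) ->
  splits (meas_set d E) D (fun k => C (E k).1).
Proof.
move=> C_closed x y [q1 xq1] [q2 yq2].
exists (meas E (fun u => if C u then q1 u else q2 u)); first by eexists.
move=> k Dk; rewrite xq1 yq2 /meas -(C_closed k Dk).
by case: (C (E k).1).
Qed.

Hypotheses (d_gt0 : (0 < d)%N) (E_graph : is_ordered_graph E)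
  (D_star : star_like (meas_set d E) D).

Lemma star_like_endpoints_disconnected s :
  D s -> ~~ connect off_adj (E s).1 (E s).2.
Proof.
move=> Ds; apply/negP=> conn; have [x [q xq] x0] := star_like_support D_star.
have : x s <> 0 by move/x0; rewrite Ds.
apply; rewrite xq (meas_edge q (or_introl (edge_pair E s))).
by rewrite (eq_off_connect (q := q) _ conn) ?sqdist_xx // => k /x0; rewrite xq.
Qed.

Lemma star_like_endpoint s :
  D s -> (forall k, incident E (E s).1 k -> D k) \/ (forall k, incident E (E s).2 k -> D k).
Proof.
move=> Ds; set a := (E s).1; set b := (E s).2.
have [off_a|] := boolP [exists k, incident E a k && ~~ D k]; last first.
  by rewrite negb_exists => /forallP a_in; left=> k ak; move: (a_in k); rewrite ak negbK.
have [off_b|] := boolP [exists k, incident E b k && ~~ D k]; last first.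
  by rewrite negb_exists => /forallP b_in; right=> k bk; move: (b_in k); rewrite bk negbK.
(* Otherwise the component of [a] in the graph without [D] cuts the edges outside [D]
   into two nonempty classes along which the measurement set splits. *)
exfalso; have ab := star_like_endpoints_disconnected Ds.
have from_a u k : ~~ D k -> incident E u k ->
    connect off_adj a (E k).1 = connect off_adj a u.
  move=> Dk; rewrite (off_connect_edge a Dk) /incident => /orP [] /eqP ->; last by [].
  by rewrite (off_connect_edge a Dk).
apply: (star_like_unsplit D_star (P := fun k => connect off_adj a (E k).1)).
- case/existsP: off_a => k /andP [ak Dk]; exists k; by rewrite Dk (from_a a) ?connect0.
- case/existsP: off_b => k /andP [bk Dk]; exists k; by rewrite Dk (from_a b).
- apply: closed_cut_splits => k Dk; exact: off_connect_edge.
Qed.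

Lemma star_like_eq_incident w s :
  (forall k, incident E w k -> D k) -> incident E w s -> D s -> D =1 incident E w.
Proof.
move=> w_in ws Ds t; apply/idP/idP=> [Dt|]; last exact: w_in.
have x_off k : ~~ D k -> meas E (cut_conf d (pred1 w)) k = 0.
  by rewrite meas_star_conf //; case: (boolP (incident E w k)) => // /w_in ->.
have := star_like_flat D_star (ex_intro _ _ (fun _ => erefl)) x_off Ds Dt.
rewrite !meas_star_conf // ws; case: (incident E w t) => // d0.
by case: (INR_neq0 d_gt0).
Qed.

Lemma star_like_incident : exists w, D =1 incident E w.
Proof.
have [s Ds] := star_like_nonempty D_star.
have [w_in|w_in] := star_like_endpoint Ds; [exists (E s).1 | exists (E s).2];
  apply: star_like_eq_incident w_in _ Ds; by rewrite /incident eqxx ?orbT.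
Qed.

End StarLike.

Lemma inj_surj_bij (T : finType) (T' : eqType) (f : T -> T') :
  injective f -> (forall y, y \in codom f) -> bijective f.
Proof.
move=> f_inj f_surj; exists (fun y => iinv (f_surj y)) => [x|y]; last exact: f_iinv.
by apply: f_inj; rewrite f_iinv.
Qed.

Section StarMap.
Variables (V W : finType) (m : nat) (E : 'I_m -> V * V) (E' : 'I_m -> W * W).
Variable sigma : V -> W.
Hypothesis sigma_star : forall v, incident E v =1 incident E' (sigma v).

Lemma star_map_inj :
  (forall i j, i <> j -> exists k, incident E i k && ~~ incident E j k) -> injective sigma.
Proof.
move=> separates i j sij; case: (eqVneq i j) => // /eqP /separates [k].
by rewrite !sigma_star sij andbN.
Qed.

Lemma star_map_edge : is_ordered_graph E -> injective sigma ->
  forall k, same_upair (E' k) (sigma (E k).1, sigma (E k).2).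
Proof.
move=> E_graph sigma_inj k; have := edge_neq E_graph (or_introl (edge_pair E k)).
rewrite -(inj_eq sigma_inj).
have : incident E' (sigma (E k).1) k by rewrite -sigma_star /incident eqxx.
have : incident E' (sigma (E k).2) k by rewrite -sigma_star /incident eqxx orbT.
rewrite /incident /same_upair /=; case: (E' k) => a b /=.
by do 2!case/orP=> /eqP ->; rewrite ?eqxx //; auto.
Qed.

Lemma star_map_surj : is_ordered_graph E -> injective sigma -> no_isolated E' ->
  forall w, w \in codom sigma.
Proof.
move=> E_graph sigma_inj E'_cover w; have [k wk] := E'_cover w.
case: wk => ->; case: (star_map_edge E_graph sigma_inj k) => -[e1 e2];
  by rewrite ?e1 ?e2; apply: codom_f.
Qed.

End StarMap.

Theorem mainTheorem3 (d n nH m : nat)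
  (EG : 'I_m -> 'I_n * 'I_n) (EH : 'I_m -> 'I_nH * 'I_nH) :
  (1 <= d)%N ->
  is_ordered_graph EG -> k_connected EG 3 ->
  is_ordered_graph EH -> no_isolated EH ->
  (forall x : 'I_m -> R, meas_set d EG x <-> meas_set d EH x) ->
  exists sigma : 'I_n -> 'I_nH, bijective sigma /\
    forall k, same_upair (EH k) (sigma (EG k).1, sigma (EG k).2).
Proof.
move=> d_gt0 EG_graph EG_conn EH_graph EH_cover same_meas.
have meas_GH : meas_set d EG = meas_set d EH.
  by apply: functional_extensionality => x; apply: propositional_extensionality.
have star_GH v : exists w, incident EG v =1 incident EH w.
  apply: (star_like_incident (E := EH) d_gt0 EH_graph).
  by rewrite -meas_GH; apply: incident_star_like.
have [sigma sigma_star] := fin_all_exists star_GH.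
have sigma_inj : injective sigma.
  exact: star_map_inj sigma_star (incident_separates EG_conn).
exists sigma; split; last exact: star_map_edge sigma_star EG_graph sigma_inj.
exact: inj_surj_bij sigma_inj (star_map_surj sigma_star EG_graph sigma_inj EH_cover).
Qed.
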